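(* For any graph $G$ with vertex set $[n]$, let $$f(G):=\min\{d\ge1:\ \exists \text{ subspaces } \mathcal{L}_1,\dots,\mathcal{L}_n\subseteq\mathbb{C}^d \text{ such that for all distinct } i,j\in[n],\ \mathcal{L}_i\perp\mathcal{L}_j \iff i\not\sim j\}.$$ Then $$f(G)=\min\{\mathrm{cpsd}\text{-}\mathrm{rank}(X):\ X \text{ is an } n\times n \text{ cpsd matrix with } S(X)=G\}.$$
   Context: Graphs are simple (no loops). An $n\times n$ matrix $X$ is completely positive semidefinite (cpsd) if there exist $d\ge1$ and Hermitian positive semidefinite $d\times d$ matrices $P_1,\dots,P_n$ with $X_{ij}=\mathrm{Tr}(P_iP_j)$ for all $i,j$; the cpsd-rank of $X$ is the least such $d$. The support graph $S(X)$ of a symmetric $n\times n$ matrix $X$ is the graph on $[n]$ with $u\sim v$ iff $u\ne v$ and $X_{uv}\neq0$. Orthogonality of subspaces is with respect to the standard inner product on $\mathbb{C}^d$. *)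

From HB Require Import structures.
From mathcomp Require Import all_boot all_order all_algebra.
From mathcomp Require Import spectral.
From mathcomp Require Import complex.
From mathcomp Require Import reals.
Set Implicit Arguments. Unset Strict Implicit. Unset Printing Implicit Defensive.
Import Order.TTheory GRing.Theory Num.Theory.
Local Open Scope ring_scope.
Local Open Scope sesquilinear_scope.

Notation Cx R := (complex R).

Definition simple_graph n (G : rel 'I_n) :=
  symmetric G /\ irreflexive G.

Definition hpsd (C : numClosedFieldType) d (P : 'M[C]_d) :=
  P ^t* = P /\ forall v : 'rV[C]_d, 0 <= (v *m P *m v ^t*) 0 0.

Definition cpsd_rep (C : numClosedFieldType) n d (X : 'M[C]_n) :=
  exists P : 'I_n -> 'M[C]_d,
    (forall i, hpsd (P i)) /\ forall i j, X i j = \tr (P i *m P j).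

Definition cpsd (C : numClosedFieldType) n (X : 'M[C]_n) :=
  exists d, (1 <= d)%N /\ cpsd_rep d X.

Definition is_cpsd_rank (C : numClosedFieldType) n (X : 'M[C]_n) d :=
  [/\ (1 <= d)%N, cpsd_rep d X & forall d', (1 <= d')%N -> cpsd_rep d' X -> (d <= d')%N].

Definition support_is (C : numClosedFieldType) n (X : 'M[C]_n) (G : rel 'I_n) :=
  forall u v : 'I_n, u != v -> (X u v != 0) = G u v.

(* Subspaces L_i of C^d, each given as the row space of a matrix L i;
   L_i and L_j are orthogonal iff L i *m (L j)^* = 0. *)
Definition orth_subspaces (C : numClosedFieldType) d p q
  (A : 'M[C]_(p, d)) (B : 'M[C]_(q, d)) := A *m B ^t* == 0.

Definition orth_rep (C : numClosedFieldType) n (G : rel 'I_n) d :=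
  exists L : 'I_n -> 'M[C]_d,
    forall i j : 'I_n, i != j -> (orth_subspaces (L i) (L j) = ~~ G i j).

Definition least_pos (P : nat -> Prop) d :=
  [/\ (1 <= d)%N, P d & forall d', (1 <= d')%N -> P d' -> (d <= d')%N].

From HB Require Import structures.
From mathcomp Require Import all_boot all_order all_algebra.
From mathcomp Require Import spectral complex reals.
From Stdlib Require Classical_Prop Wf_nat.
Import GRing.Theory Num.Theory.
Local Open Scope ring_scope.
Local Open Scope sesquilinear_scope.
Set Implicit Arguments. Unset Strict Implicit.

(* If P_i = L_i^* L_i, then Tr(P_i P_j) = ||L_j L_i^*||^2, which vanishes
   exactly when the row spaces of L_i and L_j are orthogonal; conversely every
   psd d x d matrix factors as L^* L with L again d x d.  So in every dimension
   d, orthogonality representations of G and cpsd representations of matrices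
   with support G are in correspondence, and the two minima agree.  Both sets of
   dimensions are nonempty: the incidence vectors of the edges give an
   orthogonality representation in dimension 2^n. *)

Section GramTrace.
Variable C : numClosedFieldType.

Lemma trmxC_mul m n p (A : 'M[C]_(m, n)) (B : 'M[C]_(n, p)) :
  (A *m B)^t* = B^t* *m A^t*.
Proof. by rewrite trmx_mul map_mxM. Qed.

Lemma trmxC_eq0 m n (A : 'M[C]_(m, n)) : (A^t* == 0) = (A == 0).
Proof. by rewrite map_mx_eq0 trmx_eq0. Qed.

Lemma mxtrace_mulmxtC m n (M : 'M[C]_(m, n)) :
  \tr (M *m M^t*) = \sum_i \sum_k `|M i k| ^+ 2.
Proof.
apply: eq_bigr => i _; rewrite mxE.
by apply: eq_bigr => k _; rewrite !mxE normCK.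
Qed.

Lemma mxtrace_mulmxtC_eq0 m n (M : 'M[C]_(m, n)) :
  (\tr (M *m M^t*) == 0) = (M == 0).
Proof.
apply/eqP/eqP => [trM0|->]; last by rewrite mul0mx mxtrace0.
apply/matrixP => i k; rewrite mxE; apply/eqP.
rewrite -normr_eq0 -(sqrf_eq0 `|M i k|); apply/eqP.
have row0 : \sum_k `|M i k| ^+ 2 = 0.
  rewrite mxtrace_mulmxtC in trM0; apply: (psumr_eq0P _ trM0) => // j _.
  by apply: sumr_ge0 => l _; rewrite exprn_ge0.
by apply: (psumr_eq0P _ row0) => // l _; rewrite exprn_ge0.
Qed.

Lemma mxtrace_gram_mul_eq0 p q d (A : 'M[C]_(p, d)) (B : 'M[C]_(q, d)) :
  (\tr ((A^t* *m A) *m (B^t* *m B)) == 0) = (A *m B^t* == 0).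
Proof.
have -> : \tr ((A^t* *m A) *m (B^t* *m B)) = \tr ((B *m A^t*) *m (B *m A^t*)^t*).
  by rewrite !mulmxA mxtrace_mulC !mulmxA trmxC_mul trmxCK !mulmxA.
by rewrite mxtrace_mulmxtC_eq0 -trmxC_eq0 trmxC_mul trmxCK.
Qed.

Lemma hpsd_gram p d (L : 'M[C]_(p, d)) : hpsd (L^t* *m L).
Proof.
split; first by rewrite trmxC_mul trmxCK.
move=> v; have -> : v *m (L^t* *m L) *m v^t* = (v *m L^t*) *m (v *m L^t*)^t*.
  by rewrite trmxC_mul trmxCK !mulmxA.
by rewrite mxE; apply: sumr_ge0 => k _; rewrite !mxE mul_conjC_ge0.
Qed.

Definition gram_factor d (P : 'M[C]_d) : 'M[C]_d :=
  diag_mx (\row_k sqrtC (spectral_diag P 0 k)) *m spectralmx P.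

Lemma hpsd_gram_factor d (P : 'M[C]_d) :
  hpsd P -> P = (gram_factor P)^t* *m gram_factor P.
Proof.
move=> [Pherm Ppsd].
have /orthomx_spectralP : P \is normalmx by apply/normalmxP; rewrite Pherm.
set U := spectralmx P; set D := spectral_diag P.
have Uunitary : U \is unitarymx := spectral_unitarymx P.
rewrite invmx_unitary // => PE.
have Dge0 k : 0 <= D 0 k.
  (* [D 0 k] is the value of the form of [P] at the k-th row of [U]. *)
  have := Ppsd (delta_mx 0 k *m U).
  rewrite PE trmxC_mul !mulmxA !(mulmxtVK _ Uunitary) mul_mx_diag mxE.
  rewrite (bigD1 k) //= big1 ?addr0 => [|j /negPf kj]; last first.
    by rewrite !mxE kj !mul0r.
  by rewrite !mxE !eqxx conjC1 mulr1 mul1r.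
rewrite /gram_factor -/U -/D trmxC_mul tr_diag_mx map_diag_mx !mulmxA PE.
congr (_ *m U).
rewrite -mulmxA mulmx_diag; congr (_ *m diag_mx _); apply/rowP => k.
by rewrite !mxE /= geC0_conj ?sqrtC_ge0 // -expr2 sqrtCK.
Qed.

End GramTrace.

Section Correspondence.
Variables (C : numClosedFieldType) (n : nat) (G : rel 'I_n).

Lemma orth_rep_cpsd_rep d :
  @orth_rep C n G d -> exists X : 'M[C]_n, support_is X G /\ cpsd_rep d X.
Proof.
move=> [L orthL].
exists (\matrix_(i, j) \tr (((L i)^t* *m L i) *m ((L j)^t* *m L j))); split.
  move=> u v uv; rewrite mxE mxtrace_gram_mul_eq0.
  by have := orthL u v uv; rewrite /orth_subspaces => ->; rewrite negbK.
by exists (fun i => (L i)^t* *m L i); split => [i|i j]; [exact: hpsd_gram | rewrite mxE].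
Qed.

Lemma cpsd_rep_orth_rep d (X : 'M[C]_n) :
  support_is X G -> cpsd_rep d X -> @orth_rep C n G d.
Proof.
move=> suppX [P [Ppsd XP]].
exists (fun i => gram_factor (P i)) => i j ij.
rewrite /orth_subspaces -mxtrace_gram_mul_eq0 -!hpsd_gram_factor // -XP.
by rewrite -(suppX i j ij) negbK.
Qed.

End Correspondence.

Section EdgeIncidence.
Variables (C : numClosedFieldType) (n : nat) (G : rel 'I_n).
Hypothesis simpleG : simple_graph G.

Definition edge_at (i : 'I_n) (S : {set 'I_n}) :=
  [exists j, (S == [set i; j]) && G i j].

Lemma edge_at2 i j S :
  i != j -> edge_at i S && edge_at j S = (S == [set i; j]) && G i j.
Proof.
move=> ij; have [symG _] := simpleG; apply/andP/andP.
  move=> [/existsP[a /andP[/eqP Sa Gia]] /existsP[b /andP[/eqP Sb _]]].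
  have : j \in S by rewrite Sb set21.
  by rewrite Sa in_set2 eq_sym (negPf ij) /= => /eqP ja; subst a.
move=> [/eqP -> Gij]; split; apply/existsP.
  by exists j; rewrite eqxx Gij.
by exists i; rewrite setUC eqxx -symG Gij.
Qed.

(* Every row of [incidence_mx i] is the indicator of the edges at [i], the
   coordinates being indexed by the subsets of ['I_n]. *)
Definition incidence_mx (i : 'I_n) : 'M[C]_#|{: {set 'I_n}}| :=
  \matrix_(a, k) (edge_at i (enum_val k))%:R.

Lemma incidence_mx_mulmxtC i j a b : i != j ->
  (incidence_mx i *m (incidence_mx j)^t*) a b = (G i j)%:R.
Proof.
move=> ij; rewrite mxE.
under eq_bigr => k _ do rewrite !mxE conjC_nat -natrM mulnb.
rewrite -(big_enum_val (fun S => (edge_at i S && edge_at j S)%:R)) /=.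
under eq_bigr => S _ do rewrite edge_at2 //.
case: (G i j); last by rewrite big1 // => S _; rewrite andbF.
by rewrite (bigD1 [set i; j]) //= eqxx big1 ?addr0 // => S /negPf ->.
Qed.

Lemma orth_rep_incidence : @orth_rep C n G #|{: {set 'I_n}}|.
Proof.
exists incidence_mx => i j ij; rewrite /orth_subspaces.
have k0 : 'I_#|{: {set 'I_n}}| by apply: (@enum_rank _ set0).
apply/eqP/idP => [/matrixP/(_ k0 k0)|Gij].
  by rewrite incidence_mx_mulmxtC // mxE; case: (G i j) => // /eqP; rewrite oner_eq0.
by apply/matrixP => a b; rewrite incidence_mx_mulmxtC // mxE (negPf Gij).
Qed.

End EdgeIncidence.

Lemma least_pos_exists (P : nat -> Prop) :
  (exists d, (1 <= d)%N /\ P d) -> exists d, least_pos P d.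
Proof.
move=> inhP; have [d [[[d1 Pd] dmin] _]] :=
  @Wf_nat.dec_inh_nat_subset_has_unique_least_element (fun d => (1 <= d)%N /\ P d)
    (fun d => Classical_Prop.classic _) inhP.
by exists d; split => // d' d'1 Pd'; apply/leP; apply: dmin.
Qed.

Theorem theorem3p9 (R : realType) (n : nat) (G : rel 'I_n) :
  simple_graph G ->
  exists f : nat,
    least_pos (fun d => @orth_rep (Cx R) n G d) f /\
    least_pos (fun r => exists X : 'M[Cx R]_n,
                  cpsd X /\ support_is X G /\ is_cpsd_rank X r) f.
Proof.
move=> simpleG.
have [f [f1 orthf fmin]] : exists f, least_pos (@orth_rep (Cx R) n G) f.
  apply: least_pos_exists; exists #|{: {set 'I_n}}|.
  by split; [rewrite (cardD1 set0) inE | exact: orth_rep_incidence simpleG].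
have [X [suppX repX]] := orth_rep_cpsd_rep orthf.
have rankX : is_cpsd_rank X f.
  split=> // r r1 repXr; exact: fmin r r1 (cpsd_rep_orth_rep suppX repXr).
exists f; split; first by [].
split=> //; first by exists X; split; [exists f | split].
move=> r r1 [Y [_ [suppY [_ repYr _]]]].
exact: fmin r r1 (cpsd_rep_orth_rep suppY repYr).
Qed.
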